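(* Let $\mathcal{I}$ be an interval hypergraph on $[n]$ and $A$ an acyclic orientation of $\mathcal{I}$. Then the fiber $\{\pi:\mathrm{Or}_\pi=A\}$ is an interval $[\sigma,\tau]$ of the weak order on permutations of $[n]$, where $\sigma$ avoids the pattern $231$ and $\tau$ avoids the pattern $213$.
   Context: An interval hypergraph $\mathcal{I}$ on $[n]$ is a collection of intervals of $[n]$ containing all singletons. An orientation is a map $O:\mathcal{I}\to[n]$ with $O(I)\in I$; it is acyclic if there are no $H_1,\dots,H_k\in\mathcal{I}$, $k\ge2$, with $O(H_{i+1})\in H_i\setminus\{O(H_i)\}$ for $i\in[k-1]$ and $O(H_1)\in H_k\setminus\{O(H_k)\}$. For a permutation $\pi$ of $[n]$ in one-line notation, $\mathrm{Or}_\pi(I)=\pi(\min\{j:\pi(j)\in I\})$. *)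

(* [n] = {1,...,n} is modelled by 'I_n = {0,...,n-1}. *)
From mathcomp Require Import all_boot all_fingroup.
Set Implicit Arguments. Unset Strict Implicit. Unset Printing Implicit Defensive.

Section Defs.
Variable n : nat.

Definition is_interval (I : {set 'I_n}) : Prop :=
  exists a b : 'I_n, a <= b /\ I = [set i : 'I_n | (a <= i) && (i <= b)].

Definition interval_hypergraph (H : {set {set 'I_n}}) : Prop :=
  (forall I, I \in H -> is_interval I) /\ (forall i : 'I_n, [set i] \in H).

(* An orientation of H: O I \in I for every hyperedge I (values of O outside H
   are irrelevant). *)
Definition orientation (H : {set {set 'I_n}}) (O : {set 'I_n} -> 'I_n) : Prop :=
  forall I, I \in H -> O I \in I.

(* Acyclicity: no H_1, ..., H_k in H, k >= 2, with
   O(H_{i+1}) \in H_i \ {O(H_i)} (indices cyclically). *)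
Definition acyclic (H : {set {set 'I_n}}) (O : {set 'I_n} -> 'I_n) : Prop :=
  ~ exists s : seq {set 'I_n},
      [/\ 2 <= size s, all (fun X : {set 'I_n} => X \in H) s &
          path.cycle (fun X Y : {set 'I_n} => (O Y \in X) && (O Y != O X)) s].

(* One-line notation of pi: the word pi(0) pi(1) ... pi(n-1).
   Or_pi(I) = pi(min {j : pi(j) \in I}) = first letter of the word lying in I
   (None if I is empty). *)
Definition oneline (pi : 'S_n) : seq 'I_n := [seq pi j | j <- enum 'I_n].

Definition Or (pi : 'S_n) (I : {set 'I_n}) : option 'I_n :=
  ohead [seq x <- oneline pi | x \in I].

Definition pos (pi : 'S_n) (a : 'I_n) : 'I_n := (pi^-1)%g a.

(* Weak order: inversion sets (of values) are included, where
   (a,b) with a < b is an inversion of pi when b appears before a. *)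
Definition weak_le (pi tau : 'S_n) : Prop :=
  forall a b : 'I_n, a < b -> pos pi b < pos pi a -> pos tau b < pos tau a.

Definition avoids231 (sigma : 'S_n) : Prop :=
  ~ exists i j k : 'I_n,
      [/\ i < j, j < k, sigma k < sigma i & sigma i < sigma j].

Definition avoids213 (sigma : 'S_n) : Prop :=
  ~ exists i j k : 'I_n,
      [/\ i < j, j < k, sigma j < sigma i & sigma i < sigma k].

End Defs.

From mathcomp Require Import all_boot all_fingroup zify.
Set Implicit Arguments. Unset Strict Implicit. Unset Printing Implicit Defensive.

(* Let x -> y when some hyperedge I is oriented to x and contains y; the fiber
   of A is the set of linear extensions of the transitive closure << of this
   relation, which acyclicity makes a strict partial order. Since hyperedges are
   intervals, << is convex: c << a implies c << b for every b strictly between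
   a and c. For a convex order, placing x before y iff x << y, or x < y and not
   y << x, is again a linear extension sigma, and breaking ties by > instead
   gives tau. The inversions of sigma are the pairs a < b with b << a, those of
   tau the pairs a < b with not a << b, so a permutation extends << iff its
   inversion set lies between these two. Convexity also rules out the pattern
   231 in sigma and 213 in tau. *)

Lemma ohead_filter_Some (T : eqType) (p : pred T) (s : seq T) y :
  ohead (filter p s) = Some y <->
  [/\ y \in s, p y & forall z, z \in s -> p z -> index y s <= index z s].
Proof.
elim: s => [|x s IHs] /=; first by split=> // -[].
case: ifP => px /=.
  split=> [[<-]|[_ py /(_ x (mem_head x s) px)]].
    by split=> [||z _ _]; rewrite ?mem_head ?px //= eqxx.
  by rewrite /= eqxx; case: eqP => [->|].
have neq_x z : p z -> (x == z) = false by apply: contraTF => /eqP <-; rewrite px.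
rewrite IHs; split=> -[ys py min_y]; split=> //.
- by rewrite inE ys orbT.
- move=> z; rewrite inE /= (neq_x y py) => /predU1P[->|zs pz]; first by rewrite px.
  by rewrite (neq_x z pz) ltnS min_y.
- by move: ys; rewrite inE eq_sym (neq_x y py).
- move=> z zs pz; have := min_y z (@mem_behead _ (x :: s) z zs) pz.
  by rewrite /= (neq_x y py) (neq_x z pz) ltnS.
Qed.

Section Positions.
Variable n : nat.
Implicit Types (pi : 'S_n) (r : rel 'I_n).

Definition before pi : rel 'I_n := fun x y => pos pi x < pos pi y.

Lemma before_perm pi i j : before pi (pi i) (pi j) = (i < j).
Proof. by rewrite /before /pos !permK. Qed.

Lemma before_trans pi : transitive (before pi).
Proof. by move=> y x z; apply: ltn_trans. Qed.

Lemma before_asym pi x y : before pi x y -> ~~ before pi y x.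
Proof. by rewrite /before -leqNgt => /ltnW. Qed.

Lemma before_total pi x y : x != y -> before pi x y || before pi y x.
Proof. by rewrite /before -neq_ltn val_eqE (inj_eq (@perm_inj _ _)). Qed.

(* The position of v in the permutation built from [r] is its number of
   [r]-predecessors. *)
Lemma exists_perm_before r :
  irreflexive r -> transitive r -> (forall x y, x != y -> r x y || r y x) ->
  exists pi, before pi =2 r.
Proof.
move=> r_irr r_trans r_total.
have rank_lt v : #|[set u | r u v]| < n.
  rewrite -[n in _ < n]card_ord -cardsT; apply: proper_card; rewrite properT.
  by apply/eqP=> all_r; have := in_setT v; rewrite -all_r inE r_irr.
pose rank v := Ordinal (rank_lt v).
have rank_mono u v : r u v -> rank u < rank v.
  move=> ruv; apply: proper_card; rewrite properE; apply/andP; split.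
    by apply/subsetP=> w; rewrite !inE => /r_trans; apply.
  by apply/subsetPn; exists u; rewrite !inE ?r_irr.
have rank_inj : injective rank.
  move=> u v /(congr1 val) /= rank_uv; apply/eqP/negPn/negP=> /r_total.
  by case/orP=> /rank_mono /=; rewrite rank_uv ltnn.
exists (perm rank_inj)^-1%g => u v; rewrite /before /pos invgK !permE.
apply/idP/idP; last exact: rank_mono.
have [-> | /r_total /orP[] // /rank_mono lt_vu lt_uv] := eqVneq u v; first by rewrite ltnn.
by have := ltn_trans lt_uv lt_vu; rewrite ltnn.
Qed.

Lemma mem_oneline pi x : x \in oneline pi.
Proof. by rewrite -(permKV pi x) map_f ?mem_enum. Qed.

Lemma index_oneline pi x : index x (oneline pi) = pos pi x.
Proof.
by rewrite -{1}(permKV pi x) index_map ?index_enum_ord //; apply: perm_inj.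
Qed.

Lemma Or_Some pi (I : {set 'I_n}) a : a \in I ->
  Or pi I = Some a <-> (forall x, x \in I -> x != a -> before pi a x).
Proof.
have pos_neq x y : x != y -> pos pi x != pos pi y :> nat.
  by rewrite val_eqE (inj_eq (@perm_inj _ _)).
move=> aI; rewrite /Or ohead_filter_Some; split=> [[_ _ min_a] x xI xa|min_a].
  by rewrite /before ltn_neqAle pos_neq 1?eq_sym // -!index_oneline min_a ?mem_oneline.
split=> // [|z _ zI]; first exact: mem_oneline.
rewrite !index_oneline; have [-> // | za] := eqVneq z a.
exact/ltnW/min_a.
Qed.
End Positions.

Definition lin_ext (T : Type) (prec lt : rel T) : rel T :=
  fun x y => prec x y || lt x y && ~~ prec y x.

Definition strictly_between (T : Type) (lt : rel T) a b c :=
  lt a b && lt b c || lt c b && lt b a.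

(* With [lt] the order of ['I_n], [weak_le_rel lt (before sigma) (before pi)]
   is [weak_le sigma pi]. *)
Definition weak_le_rel (T : Type) (lt L1 L2 : rel T) :=
  forall a b, lt a b -> L1 b a -> L2 b a.

Lemma eq_weak_le_rel (T : Type) (lt L1 L2 L1' L2' : rel T) :
  L1 =2 L1' -> L2 =2 L2' -> weak_le_rel lt L1 L2 <-> weak_le_rel lt L1' L2'.
Proof.
by move=> eq1 eq2; split=> le12 a b ab; [rewrite -eq1 -eq2 | rewrite eq1 eq2]; apply: le12.
Qed.

Lemma irr_trans_asym (T : Type) (R : rel T) :
  irreflexive R -> transitive R -> forall x y, R x y -> ~~ R y x.
Proof.
by move=> R_irr R_trans x y Rxy; apply: contraFN (R_irr x) => /(R_trans _ _ _ Rxy).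
Qed.

Section ConvexLinearExtension.
Variables (T : eqType) (prec lt : rel T).
Hypotheses (prec_irr : irreflexive prec) (prec_trans : transitive prec).
Hypotheses (lt_irr : irreflexive lt) (lt_trans : transitive lt).
Hypothesis lt_total : forall x y, x != y -> lt x y || lt y x.
Hypothesis prec_convex :
  forall a b c, strictly_between lt a b c -> prec c a -> prec c b.

Let prec_asym := irr_trans_asym prec_irr prec_trans.
Let lt_asym := irr_trans_asym lt_irr lt_trans.

Lemma lin_ext_irr : irreflexive (lin_ext prec lt).
Proof. by move=> x; rewrite /lin_ext prec_irr lt_irr. Qed.

Lemma lin_ext_total x y : x != y -> lin_ext prec lt x y || lin_ext prec lt y x.
Proof.
rewrite /lin_ext => /lt_total /orP[] ltxy; rewrite ltxy;
  by case: (prec x y); case: (prec y x); rewrite ?orbT.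
Qed.

Lemma lin_ext_trans : transitive (lin_ext prec lt).
Proof.
move=> v u w /orP[puv | /andP[luv npvu]] /orP[pvw | /andP[lvw npwv]].
- by rewrite /lin_ext (prec_trans puv pvw).
- have npwu : ~~ prec w u by apply: contra npwv => /prec_trans; apply.
  have /lt_total/orP[luw | lwu] : u != w by apply: contraNneq npwv => <-.
    by rewrite /lin_ext luw npwu orbT.
  by rewrite /lin_ext (prec_convex _ puv) // /strictly_between lvw lwu.
- have npwu : ~~ prec w u by apply: contra npvu => /(prec_trans pvw).
  have /lt_total/orP[luw | lwu] : u != w by apply: contraNneq npvu => ->.
    by rewrite /lin_ext luw npwu orbT.
  by rewrite (prec_convex _ pvw) // /strictly_between lwu luv in npvu.
- have npwu : ~~ prec w u.
    by apply: contra npwv; apply: prec_convex; rewrite /strictly_between luv lvw.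
  by rewrite /lin_ext (lt_trans luv lvw) npwu orbT.
Qed.

Lemma lin_ext_revE x y : lt x y -> lin_ext prec lt y x = prec y x.
Proof. by move=> ltxy; rewrite /lin_ext (negbTE (lt_asym ltxy)) orbF. Qed.

Lemma lin_ext_no231 a b c :
  lt c a -> lt a b -> lin_ext prec lt a b -> ~~ lin_ext prec lt b c.
Proof.
move=> lca lab; rewrite /lin_ext (negbTE (lt_asym (lt_trans lca lab))) orbF.
apply: contraTN => pbc; have pba : prec b a.
  by apply: prec_convex pbc; rewrite /strictly_between lca lab.
by rewrite pba (negbTE (prec_asym pba)) andbF.
Qed.

Lemma subrel_precP (L : rel T) :
  (forall x y, L x y -> ~~ L y x) -> (forall x y, x != y -> L x y || L y x) ->
  subrel prec L <->
  weak_le_rel lt (lin_ext prec lt) L /\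
  weak_le_rel lt L (lin_ext prec (fun x y => lt y x)).
Proof.
move=> L_asym L_total; split=> [prec_L | [le_lin_L le_L_lin] x y pxy].
  split=> a b lab; first by rewrite lin_ext_revE //; apply: prec_L.
  move=> Lba; rewrite /lin_ext lab; apply/orP; right.
  by apply: contraL Lba => /prec_L /L_asym.
have xy : x != y by apply: contraTneq pxy => ->; rewrite prec_irr.
have /orP[lxy | lyx] := lt_total xy; last by apply: le_lin_L; rewrite ?lin_ext_revE.
have /orP[//|Lyx] := L_total _ _ xy.
have := le_L_lin _ _ lxy Lyx; rewrite /lin_ext pxy.
by rewrite andbF orbF (negbTE (prec_asym pxy)).
Qed.
End ConvexLinearExtension.

Lemma strictly_betweenC (T : Type) (lt : rel T) a b c :
  strictly_between lt a b c = strictly_between lt c b a.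
Proof. by rewrite /strictly_between orbC. Qed.

Lemma strictly_between_flip (T : Type) (lt : rel T) a b c :
  strictly_between (fun x y => lt y x) a b c = strictly_between lt a b c.
Proof. by rewrite /strictly_between orbC andbC [lt c b && _]andbC. Qed.

Lemma connect_subrel_trans (T : finType) (e L : rel T) :
  transitive L -> subrel e L -> forall x y, x != y -> connect e x y -> L x y.
Proof.
move=> L_trans e_L x _ /[swap] /connectP[p e_p ->] x_last.
have /allP L_x := order_path_min L_trans (sub_path e_L e_p); apply: L_x.
by move: (mem_last x p); rewrite inE eq_sym (negbTE x_last).
Qed.

Lemma interval_convex n (I : {set 'I_n}) x y b :
  is_interval I -> x \in I -> y \in I ->
  strictly_between (fun x y : 'I_n => x < y) x b y -> b \in I.
Proof. by case=> lo [hi [_ ->]]; rewrite /strictly_between !inE; lia. Qed.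

Section IntervalHypergraph.
Variables (n : nat) (H : {set {set 'I_n}}) (A : {set 'I_n} -> 'I_n).
Hypothesis H_intervals : forall I, I \in H -> is_interval I.
Hypotheses (A_orientation : orientation H A) (A_acyclic : acyclic H A).

Local Notation ltI := (fun x y : 'I_n => x < y).
Local Notation gtI := (fun x y : 'I_n => y < x).

Let ltI_irr : irreflexive ltI := fun x => ltnn x.
Let ltI_trans : transitive ltI := fun y x z => @ltn_trans y x z.
Let gtI_irr : irreflexive gtI := ltI_irr.
Let gtI_trans : transitive gtI := fun y x z lt_yx lt_zy => ltn_trans lt_zy lt_yx.

Let ltI_total x y : x != y -> ltI x y || ltI y x.
Proof. by rewrite -val_eqE neq_ltn. Qed.

Let gtI_total x y : x != y -> gtI x y || gtI y x.
Proof. by rewrite orbC; apply: ltI_total. Qed.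

Definition arc : rel 'I_n :=
  fun x y => [exists I in H, (A I == x) && (y \in I :\ x)].

Lemma arcP x y :
  reflect (exists2 I, I \in H & [/\ A I = x, y \in I & y != x]) (arc x y).
Proof.
apply: (iffP exists_inP) => -[I IH].
  by case/andP=> /eqP AI; rewrite in_setD1 => /andP[yx yI]; exists I.
by case=> AI yI yx; exists I; rewrite ?AI ?eqxx ?in_setD1 ?yx.
Qed.

Definition prec : rel 'I_n := fun x y => (x != y) && connect arc x y.

Let hyperedge_step (X Y : {set 'I_n}) := (A Y \in X) && (A Y != A X).

Lemma arc_path_hyperedges x p : path arc x p -> p != [::] ->
  exists X s, [/\ all (fun X => X \in H) (X :: s), A X = x,
    path hyperedge_step X s & (last x p \in last X s) && (last x p != A (last X s))].
Proof.
elim: p x => [|y p IHp] x //= /andP[/arcP[I IH [AI yI yx]] path_p] _.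
case: p IHp path_p => [|z p] IHp path_p.
  by exists I, [::]; rewrite /= IH AI yI yx.
have [//|X [s [Hs AX path_s last_s]]] := IHp y path_p.
exists I, (X :: s); split=> //; first exact/andP.
by rewrite /= path_s /hyperedge_step AX AI yI yx.
Qed.

Lemma closed_arc_path x p : path arc x p -> last x p = x -> p = [::].
Proof.
move=> path_p closed; apply/eqP/negP=> /negP /(arc_path_hyperedges path_p).
case=> X [s [Hs AX path_s]]; rewrite closed => /andP[x_last x_A].
apply: A_acyclic; exists (X :: s); split=> //.
  by case: s {Hs path_s} x_last x_A => //=; rewrite AX eqxx.
by rewrite /= rcons_path path_s /hyperedge_step AX x_last x_A.
Qed.

Lemma connect_arc_antisym x y : connect arc x y -> connect arc y x -> x = y.
Proof.
move=> /connectP[p path_p ->] /connectP[q path_q last_q].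
have : p ++ q = [::].
  by apply: (closed_arc_path (x := x)); rewrite ?cat_path ?path_p ?last_cat -?last_q.
by case: p {path_p path_q last_q}.
Qed.

Lemma prec_irr : irreflexive prec.
Proof. by move=> x; rewrite /prec eqxx. Qed.

Lemma prec_trans : transitive prec.
Proof.
move=> y x z /andP[xy cxy] /andP[yz cyz]; rewrite /prec (connect_trans cxy cyz) andbT.
by apply: contraNneq xy => xz; apply/eqP/connect_arc_antisym; rewrite // xz.
Qed.

Lemma arc_prec : subrel arc prec.
Proof.
move=> x y arc_xy; rewrite /prec connect1 // andbT.
by case/arcP: arc_xy => I _ [_ _]; rewrite eq_sym.
Qed.

Lemma subrel_arcP (L : rel 'I_n) : transitive L -> subrel arc L <-> subrel prec L.
Proof.
move=> L_trans; split=> [arc_L x y /andP[] | prec_L x y /arc_prec/prec_L //].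
exact: connect_subrel_trans.
Qed.

Lemma arc_path_convex c p b :
  path arc c p -> strictly_between ltI c b (last c p) -> connect arc c b.
Proof.
elim: p c => [|v p IHp] c /=.
  by move=> _ /orP[] /andP[/ltn_trans lt_cb /lt_cb]; rewrite ltnn.
case/andP=> /arcP[I IH [AI vI vc]] path_p cb.
have arc_cv : arc c v by apply/arcP; exists I.
have [-> | bv] := eqVneq b v; first exact: connect1.
have [vb | not_vb] := boolP (strictly_between ltI v b (last v p)).
  exact: connect_trans (connect1 arc_cv) (IHp v path_p vb).
apply/connect1/arcP; exists I => //; split=> //.
  apply: (interval_convex (H_intervals IH) (A_orientation IH) vI); rewrite AI.
  by move: cb bv not_vb; rewrite /strictly_between -val_eqE /=; lia.
by move: cb; rewrite /strictly_between -val_eqE /=; lia.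
Qed.

Lemma prec_convex a b c : strictly_between ltI a b c -> prec c a -> prec c b.
Proof.
move=> abc /andP[_ /connectP[p path_p a_last]].
have cb : connect arc c b.
  by apply: arc_path_convex path_p _; rewrite -a_last strictly_betweenC.
rewrite /prec cb andbT.
by move: abc; rewrite /strictly_between -val_eqE /=; lia.
Qed.

Let prec_convex_gt a b c : strictly_between gtI a b c -> prec c a -> prec c b.
Proof. by rewrite strictly_between_flip; apply: prec_convex. Qed.

Lemma Or_fiberP pi :
  (forall I, I \in H -> Or pi I = Some (A I)) <-> subrel arc (before pi).
Proof.
split=> [fiber x y /arcP[I IH [<- yI yA]] | arc_pi I IH].
  by move: (fiber I IH) => /(Or_Some _ (A_orientation IH)); apply.
by apply/(Or_Some _ (A_orientation IH)) => x xI xA; apply/arc_pi/arcP; exists I.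
Qed.

Lemma exists_perm_lin_ext_lt : exists sigma : 'S_n, before sigma =2 lin_ext prec ltI.
Proof.
apply: exists_perm_before.
- exact: lin_ext_irr prec_irr ltI_irr.
- exact: lin_ext_trans prec_trans ltI_trans ltI_total prec_convex.
- exact: lin_ext_total ltI_total.
Qed.

Lemma exists_perm_lin_ext_gt : exists tau : 'S_n, before tau =2 lin_ext prec gtI.
Proof.
apply: exists_perm_before.
- exact: lin_ext_irr prec_irr gtI_irr.
- exact: lin_ext_trans prec_trans gtI_trans gtI_total prec_convex_gt.
- exact: lin_ext_total gtI_total.
Qed.

Lemma fiber_weak_interval sigma tau pi :
  before sigma =2 lin_ext prec ltI -> before tau =2 lin_ext prec gtI ->
  (forall I, I \in H -> Or pi I = Some (A I)) <-> weak_le sigma pi /\ weak_le pi tau.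
Proof.
move=> sigmaE tauE; rewrite Or_fiberP (subrel_arcP (@before_trans _ pi)).
rewrite (subrel_precP prec_irr prec_trans ltI_irr ltI_trans ltI_total
  (@before_asym _ pi) (@before_total _ pi)).
rewrite -(eq_weak_le_rel _ sigmaE (fun _ _ => erefl)).
by rewrite -(eq_weak_le_rel _ (fun _ _ => erefl) tauE).
Qed.

Lemma lin_ext_lt_avoids231 sigma : before sigma =2 lin_ext prec ltI -> avoids231 sigma.
Proof.
move=> sigmaE [i [j [k [ij jk ki ij']]]].
have := lin_ext_no231 prec_irr prec_trans ltI_irr ltI_trans prec_convex ki ij'.
by rewrite -!sigmaE !before_perm ij jk => /(_ isT).
Qed.

Lemma lin_ext_gt_avoids213 tau : before tau =2 lin_ext prec gtI -> avoids213 tau.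
Proof.
move=> tauE [i [j [k [ij jk ji ik]]]].
have := lin_ext_no231 prec_irr prec_trans gtI_irr gtI_trans prec_convex_gt ik ji.
by rewrite -!tauE !before_perm ij jk => /(_ isT).
Qed.

End IntervalHypergraph.

Theorem proposition3p10 (n : nat) (H : {set {set 'I_n}})
    (A : {set 'I_n} -> 'I_n) :
  interval_hypergraph H -> orientation H A -> acyclic H A ->
  exists sigma tau : 'S_n,
    [/\ (forall pi : 'S_n,
           (forall I, I \in H -> Or pi I = Some (A I)) <->
           (weak_le sigma pi /\ weak_le pi tau)),
        avoids231 sigma & avoids213 tau].
Proof.
case=> intervals _ orientation_A acyclic_A.
have [sigma sigmaE] := exists_perm_lin_ext_lt intervals orientation_A acyclic_A.
have [tau tauE] := exists_perm_lin_ext_gt intervals orientation_A acyclic_A.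
exists sigma, tau; split.
- by move=> pi; apply: fiber_weak_interval.
- exact: lin_ext_lt_avoids231 sigmaE.
- exact: lin_ext_gt_avoids213 tauE.
Qed.
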